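(* Let $H$ be a Kekul\'ean hexagonal system. Then $\zeta(H,x)=C(R(H),x)$, i.e. $z(H,i)=\alpha_i(R(H))$ for every $i\ge 0$.
   Context: A hexagonal system is a 2-connected finite plane graph in which every interior face is a regular hexagon of side length one (equivalently, a cycle of the infinite hexagonal lattice together with its interior); its hexagons are the boundaries of its interior faces. It is Kekul\'ean if it has a perfect matching. A Clar cover of $H$ is a spanning subgraph of $H$ each of whose components is either a hexagon of $H$ or a single edge ($K_2$). Let $z(H,k)$ be the number of Clar covers of $H$ with exactly $k$ hexagon components, and $Cl(H)$ the maximum such $k$. The Clar covering polynomial is $\zeta(H,x)=\sum_{k=0}^{Cl(H)} z(H,k)x^k$. The resonance graph $R(H)$ has the perfect matchings of $H$ as vertices, two being adjacent iff their symmetric difference is the edge set of a hexagon of $H$. For a graph $G$, the cube polynomial is $C(G,x)=\sum_{i\ge0}\alpha_i(G)x^i$, where $\alpha_i(G)$ is the number of induced subgraphs of $G$ isomorphic to the $i$-dimensional hypercube $Q_i$. *)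

From mathcomp Require Import all_boot all_order all_algebra.
From mathcomp Require Import finmap.
Set Implicit Arguments.
Unset Strict Implicit.
Unset Printing Implicit Defensive.
Local Open Scope fset_scope.

(** Vertices are points (x,y) of Z^2.  Edges: horizontal (x,y)-(x+1,y) for all
  (x,y), vertical (x,y)-(x,y+1) when x+y is even.  This graph, with its
  obvious plane embedding, is the hexagonal lattice; its faces ("cells",
  regular hexagons) are the bricks with lower-left corner (x,y), x+y even.
  A cell is indexed by (i,j) : int * int, with lower-left corner
  (2i+j, j) (axial coordinates). *)

Definition vert := (int * int)%type.
Definition cell := (int * int)%type.
(** an edge is stored in its canonical orientation (left->right for
    horizontal edges, bottom->top for vertical edges) *)
Definition edge := (vert * vert)%type.

Definition anchor (c : cell) : vert := (2 * c.1 + c.2, c.2)%R.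

Definition hex_verts (c : cell) : seq vert :=
  let: (x, y) := anchor c in
  [:: (x, y); (x + 1, y); (x + 2, y);
      (x, y + 1); (x + 1, y + 1); (x + 2, y + 1)]%R.

Definition hex_edges (c : cell) : seq edge :=
  let: (x, y) := anchor c in
  [:: ((x, y), (x + 1, y)); ((x + 1, y), (x + 2, y));
      ((x, y + 1), (x + 1, y + 1)); ((x + 1, y + 1), (x + 2, y + 1));
      ((x, y), (x, y + 1)); ((x + 2, y), (x + 2, y + 1))]%R.

(** two cells are adjacent iff they share an edge (six neighbours) *)
Definition cell_adj (c d : cell) : bool :=
  d \in [:: (c.1 + 1, c.2); (c.1 - 1, c.2); (c.1, c.2 + 1);
            (c.1 - 1, c.2 + 1); (c.1, c.2 - 1); (c.1 + 1, c.2 - 1)]%R.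

(** A hexagonal system is given by the finite set S of its hexagons (cells of
  the lattice).  "A cycle of the hexagonal lattice together with its
  interior" is the same as a nonempty finite set of cells which is
  connected (through shared edges) and has no holes, i.e. whose complement
  in the set of all cells is connected. *)

Definition cells_connected (S : {fset cell}) : Prop :=
  forall c d, c \in S -> d \in S ->
    exists p : seq cell, [/\ path cell_adj c p, last c p = d & all (mem S) p].

Definition complement_connected (S : {fset cell}) : Prop :=
  forall c d, c \notin S -> d \notin S ->
    exists p : seq cell,
      [/\ path cell_adj c p, last c p = d & all (fun x => x \notin S) p].

Definition hexagonal_system (S : {fset cell}) : Prop :=
  [/\ S != fset0, cells_connected S & complement_connected S].

Definition HE (S : {fset cell}) : {fset edge} :=
  \bigcup_(c <- S) [fset e | e in hex_edges c].
Definition HV (S : {fset cell}) : {fset vert} :=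
  \bigcup_(c <- S) [fset v | v in hex_verts c].

Definition incid (v : vert) (e : edge) : bool := (e.1 == v) || (e.2 == v).

Section HexSystem.
Variable S : {fset cell}.

Definition deg (F : {set HE S}) (v : vert) : nat :=
  #|[set e in F | incid v (val e)]|.

Definition perfect_matching (M : {set HE S}) : bool :=
  [forall v : HV S, deg M (val v) == 1%N].

Definition kekulean : Prop := exists M : {set HE S}, perfect_matching M.

(** the hexagon h (a hexagon of H) is a connected component of the spanning
    subgraph (V(H), F): all its edges are in F and no other edge of F meets
    it (every vertex of h has F-degree 2) *)
Definition hex_comp (F : {set HE S}) (h : cell) : bool :=
  [&& h \in S,
      [forall e : HE S, (val e \in hex_edges h) ==> (e \in F)] &
      all (fun v => deg F v == 2%N) (hex_verts h)].

Definition edge_comp (F : {set HE S}) (e : HE S) : bool :=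
  [&& e \in F, deg F (val e).1 == 1%N & deg F (val e).2 == 1%N].

(** Clar cover: spanning subgraph (V(H), F) every component of which is a
    hexagon of H or a K2, i.e. every vertex of H lies in such a component *)
Definition clar_cover (F : {set HE S}) : bool :=
  [forall v : HV S,
     [exists h : S, hex_comp F (val h) && (val v \in hex_verts (val h))]
     || [exists e : HE S, edge_comp F e && incid (val v) (val e)]].

Definition nhex (F : {set HE S}) : nat := #|[set h : S | hex_comp F (val h)]|.

Definition zClar (k : nat) : nat :=
  #|[set F : {set HE S} | clar_cover F && (nhex F == k)]|.

Definition res_adj (M N : {set HE S}) : bool :=
  [exists h : S, [forall e : HE S,
     ((e \in M) != (e \in N)) == (val e \in hex_edges (val h))]].

(** the hypercube Q_i : vertices are subsets of 'I_i (= 0/1-strings of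
    length i), adjacent iff they differ in exactly one coordinate *)
Definition cube_adj (i : nat) (a b : {set 'I_i}) : bool :=
  #|(a :\: b) :|: (b :\: a)| == 1%N.

Definition induces_cube (i : nat) (W : {set {set HE S}}) : bool :=
  [exists f : {ffun {set 'I_i} -> {set HE S}},
     [&& injectiveb f, [set f a | a in [set: {set 'I_i}]] == W &
         [forall a, forall b, res_adj (f a) (f b) == cube_adj a b]]].

Definition alpha (i : nat) : nat :=
  #|[set W : {set {set HE S}} |
       [forall M in W, perfect_matching M] && induces_cube i W]|.

End HexSystem.

From mathcomp Require Import all_boot all_order all_algebra.
From mathcomp Require Import finmap zify.
Set Implicit Arguments.
Unset Strict Implicit.
Unset Printing Implicit Defensive.

(* A Clar cover F with k hexagon components contains a perfect matching M0
   (take one Kekule structure on each hexagon and the K2 components), and the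
   perfect matchings contained in F are exactly the matchings obtained from M0
   by rotating an arbitrary subset of the k hexagons: the K2 components are
   forced.  Rotating disjoint hexagons commutes, so these 2^k matchings induce
   a k-cube of the resonance graph, and their union is F again.
   Conversely, the edges of an induced k-cube leaving a vertex M0 rotate k
   hexagons.  In every square of the cube the two hexagons rotated along
   opposite sides coincide, because two hexagons share at most one edge; and
   two hexagons that can be rotated independently are vertex-disjoint.  Hence
   the cube consists of M0 with any subset of k disjoint alternating hexagons
   rotated, and its union is a Clar cover with exactly these hexagons.  So
   F |-> {perfect matchings contained in F} is a bijection from the Clar covers
   with k hexagons onto the induced k-cubes. *)

Definition kekuleA (c : cell) : seq edge :=
  let: (x, y) := anchor c in
  [:: ((x, y), (x + 1, y)); ((x + 2, y), (x + 2, y + 1));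
      ((x, y + 1), (x + 1, y + 1))]%R.
Definition kekuleB (c : cell) : seq edge :=
  let: (x, y) := anchor c in
  [:: ((x + 1, y), (x + 2, y)); ((x + 1, y + 1), (x + 2, y + 1));
      ((x, y), (x, y + 1))]%R.

Ltac split_bool_hyps := repeat match goal with
  | H : is_true (_ || _) |- _ => case/orP: H => H
  | H : is_true (_ && _) |- _ => let H' := fresh "H" in case/andP: H => H H'
  | H : is_true (_ == _) |- _ => move/eqP: H => H
  end.

Lemma mem_hex_edges c e :
  (e \in hex_edges c) = (e \in kekuleA c) || (e \in kekuleB c).
Proof.
case: c => i j; rewrite /hex_edges /kekuleA /kekuleB /= !inE.
by do 6 case: (e == _); rewrite ?orbT.
Qed.

Lemma uniq_kekule c : uniq (kekuleA c ++ kekuleB c).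
Proof. by case: c => i j; rewrite /kekuleA /kekuleB /= !inE !xpair_eqE; lia. Qed.

Lemma size_kekuleA c : size (kekuleA c) = 3.
Proof. by case: c. Qed.

Lemma size_kekuleB c : size (kekuleB c) = 3.
Proof. by case: c. Qed.

Lemma count_incid_kekuleA c v :
  v \in hex_verts c -> count (incid v) (kekuleA c) = 1.
Proof.
case: c => i j; rewrite /hex_verts /kekuleA /incid /= !inE => Hv.
by split_bool_hyps; subst; rewrite /= !xpair_eqE; lia.
Qed.

Lemma count_incid_kekuleB c v :
  v \in hex_verts c -> count (incid v) (kekuleB c) = 1.
Proof.
case: c => i j; rewrite /hex_verts /kekuleB /incid /= !inE => Hv.
by split_bool_hyps; subst; rewrite /= !xpair_eqE; lia.
Qed.

Lemma hex_edge_vert c e v : e \in hex_edges c -> incid v e -> v \in hex_verts c.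
Proof.
case: c => i j; rewrite /hex_edges /hex_verts /incid /= !inE => He.
by split_bool_hyps; subst => /orP [] /eqP <-; rewrite ?eqxx ?orbT.
Qed.

Lemma anchor_hex_verts c : anchor c \in hex_verts c.
Proof. by case: c => i j; rewrite /hex_verts /= mem_head. Qed.

Lemma incid_fst (e : edge) : incid e.1 e.
Proof. by rewrite /incid eqxx. Qed.

Lemma incid_snd (e : edge) : incid e.2 e.
Proof. by rewrite /incid eqxx orbT. Qed.

Lemma common_hex_edges c d e1 e2 : e1 != e2 ->
  e1 \in hex_edges c -> e1 \in hex_edges d ->
  e2 \in hex_edges c -> e2 \in hex_edges d -> c = d.
Proof.
case: c d e1 e2 => i j [k l] [[a1 b1] [c1 d1]] [[a2 b2] [c2 d2]].
rewrite /hex_edges /= !inE !xpair_eqE => N12 H1 H2 H3 H4; apply/eqP; rewrite xpair_eqE.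
by move: H2 H4; split_bool_hyps; subst; lia.
Qed.

(* The edges of a hexagon form a cycle. *)
Lemma hex_edges_const c (P : edge -> bool) :
  (forall v e1 e2, v \in hex_verts c -> e1 \in hex_edges c -> e2 \in hex_edges c ->
     incid v e1 -> incid v e2 -> P e1 = P e2) ->
  {in hex_edges c &, forall e1 e2, P e1 = P e2}.
Proof.
case: c => i j; rewrite /hex_verts /hex_edges /=; set x : int := (2 * i + j)%R => link.
have E1 : P (x + 1, j, (x + 2, j))%R = P (x, j, (x + 1, j))%R.
  by apply: (link (x + 1, j)%R); rewrite /incid ?inE ?eqxx ?orbT.
have E2 : P (x + 2, j, (x + 2, j + 1))%R = P (x, j, (x + 1, j))%R.
  by rewrite -E1; apply: (link (x + 2, j)%R); rewrite /incid ?inE ?eqxx ?orbT.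
have E3 : P (x + 1, j + 1, (x + 2, j + 1))%R = P (x, j, (x + 1, j))%R.
  by rewrite -E2; apply: (link (x + 2, j + 1)%R); rewrite /incid ?inE ?eqxx ?orbT.
have E4 : P (x, j + 1, (x + 1, j + 1))%R = P (x, j, (x + 1, j))%R.
  by rewrite -E3; apply: (link (x + 1, j + 1)%R); rewrite /incid ?inE ?eqxx ?orbT.
have E5 : P (x, j, (x, j + 1))%R = P (x, j, (x + 1, j))%R.
  by rewrite -E4; apply: (link (x, j + 1)%R); rewrite /incid ?inE ?eqxx ?orbT.
move=> e1 e2; rewrite !inE => H1 H2; split_bool_hyps; subst.
all: by rewrite ?E1 ?E2 ?E3 ?E4 ?E5.
Qed.

Section SymmetricDifference.
Variable T : finType.
Implicit Types A B C : {set T}.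

Definition symdiff A B := (A :\: B) :|: (B :\: A).

Lemma in_symdiff A B x : (x \in symdiff A B) = (x \in A) (+) (x \in B).
Proof. by rewrite !inE; case: (x \in A); case: (x \in B). Qed.

Lemma symdiff0 A : symdiff A set0 = A.
Proof. by apply/setP => x; rewrite in_symdiff in_set0 addbF. Qed.

Lemma symdiffK A B : symdiff (symdiff A B) B = A.
Proof. by apply/setP => x; rewrite !in_symdiff -addbA addbb addbF. Qed.

Lemma symdiffKl A B : symdiff A (symdiff A B) = B.
Proof. by apply/setP => x; rewrite !in_symdiff addbA addbb. Qed.

Lemma symdiffA A B C : symdiff A (symdiff B C) = symdiff (symdiff A B) C.
Proof. by apply/setP => x; rewrite !in_symdiff addbA. Qed.

Lemma symdiff_symdiffl A B C : symdiff (symdiff A B) (symdiff A C) = symdiff B C.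
Proof. by apply/setP => x; rewrite !in_symdiff addbACA addbb. Qed.

Lemma symdiffvv A : symdiff A A = set0.
Proof. by apply/setP => x; rewrite in_symdiff addbb in_set0. Qed.

Lemma symdiff_eq0 A B : (symdiff A B == set0) = (A == B).
Proof.
apply/eqP/eqP => [/setP AB|->]; last exact: symdiffvv.
by apply/setP => x; have := AB x; rewrite in_symdiff in_set0; case: (x \in A); case: (x \in B).
Qed.

Lemma symdiffIl A B C : symdiff A B :&: C = symdiff (A :&: C) (B :&: C).
Proof.
apply/setP => x; rewrite !(in_setI, in_symdiff).
by case: (x \in A); case: (x \in B); case: (x \in C).
Qed.

End SymmetricDifference.

Lemma setU1_ind (T : finType) (P : {set T} -> Prop) :
  P set0 -> (forall (x : T) (A : {set T}), x \notin A -> P A -> P (x |: A)) -> forall A, P A.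
Proof.
move=> P0 PU1 A; move Hn : #|A| => n; elim: n A Hn => [|n IHn] A Hn.
  by move/eqP: Hn; rewrite cards_eq0 => /eqP ->.
have /set0Pn [x Hx] : A != set0 by rewrite -card_gt0 Hn.
rewrite -(setD1K Hx); apply: PU1; first by rewrite setD11.
by apply: IHn; move: Hn; rewrite (cardsD1 x) Hx add1n => -[].
Qed.

Local Open Scope fset_scope.

Lemma card_val_seq (K : choiceType) (A : {fset K}) (s : seq K) :
  uniq s -> {subset s <= A} -> #|[set x : A | val x \in s]| = size s.
Proof.
move=> Us sA; rewrite cardE -(size_map val); apply: perm_size.
apply: uniq_perm => [||x]; first by rewrite (map_inj_uniq val_inj) enum_uniq.
  exact: Us.
apply/mapP/idP => [[y]|xs]; first by rewrite mem_enum inE => ? ->.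
by exists [` sA x xs]; rewrite // mem_enum inE.
Qed.

Section Matchings.
Variable S : {fset cell}.
Local Notation E := (HE S).
Implicit Types (M N F X : {set E}) (c d : cell) (v : vert).

Definition star v : {set E} := [set e | incid v (val e)].
Definition edge_set (s : seq edge) : {set E} := [set e | val e \in s].
Definition hex c := edge_set (hex_edges c).
Definition hexA c := edge_set (kekuleA c).
Definition hexB c := edge_set (kekuleB c).

Lemma degE F v : deg F v = #|F :&: star v|.
Proof. by rewrite /deg setIdE. Qed.

Lemma perfect_matchingP M :
  reflect (forall v, v \in HV S -> #|M :&: star v| = 1) (perfect_matching M).
Proof.
apply: (iffP forallP) => [H v Hv|H v]; first by have /eqP := H [` Hv]; rewrite degE.
by rewrite degE H ?fsvalP.
Qed.

Lemma card_pm_star M v : perfect_matching M -> v \in HV S -> #|M :&: star v| = 1.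
Proof. by move=> /perfect_matchingP; apply. Qed.

Lemma pm_star M v : perfect_matching M -> v \in HV S -> exists e, M :&: star v = [set e].
Proof. by move=> HM Hv; apply/cards1P; rewrite card_pm_star. Qed.

Lemma mem_HE c e : c \in S -> e \in hex_edges c -> e \in E.
Proof. by move=> Hc He; apply/bigfcupP; exists c; rewrite ?Hc ?in_fset. Qed.

Lemma mem_HV c v : c \in S -> v \in hex_verts c -> v \in HV S.
Proof. by move=> Hc Hv; apply/bigfcupP; exists c; rewrite ?Hc ?in_fset. Qed.

Lemma HV_incid (e : E) v : incid v (val e) -> v \in HV S.
Proof.
have /bigfcupP [c /andP [Hc _]] := fsvalP e; rewrite in_fset => He Hv.
exact: mem_HV Hc (hex_edge_vert He Hv).
Qed.

Lemma star_fst (e : E) : e \in star (val e).1.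
Proof. by rewrite inE incid_fst. Qed.

Lemma star_snd (e : E) : e \in star (val e).2.
Proof. by rewrite inE incid_snd. Qed.

Lemma card_edge_set s : uniq s -> {subset s <= E} -> #|edge_set s| = size s.
Proof. exact: card_val_seq. Qed.

Lemma card_edge_setI_star s v : uniq s -> {subset s <= E} ->
  #|edge_set s :&: star v| = count (incid v) s.
Proof.
move=> Us sE; have -> : edge_set s :&: star v = edge_set (filter (incid v) s).
  by apply/setP => e; rewrite !inE mem_filter andbC.
rewrite card_edge_set ?filter_uniq ?size_filter // => e.
by rewrite mem_filter => /andP [_ /sE].
Qed.

Lemma hexE c : hex c = hexA c :|: hexB c.
Proof. by apply/setP => e; rewrite in_setU !in_set mem_hex_edges. Qed.

Lemma hexA_hexB c : hexA c :&: hexB c = set0.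
Proof.
apply/setP => e; rewrite in_set0 in_setI !in_set.
have := uniq_kekule c; rewrite cat_uniq => /and3P [_ /hasPn AB _].
by apply/negbTE/andP => -[eA /AB]; rewrite eA.
Qed.

Lemma hex_star_vert c e v : e \in hex c -> e \in star v -> v \in hex_verts c.
Proof. rewrite !in_set; exact: hex_edge_vert. Qed.

Section InS.
Variable c : cell.
Hypothesis cS : c \in S.

Let kekuleA_sub : {subset kekuleA c <= E}.
Proof. by move=> e eA; apply: mem_HE cS _; rewrite mem_hex_edges eA. Qed.

Let kekuleB_sub : {subset kekuleB c <= E}.
Proof. by move=> e eB; apply: mem_HE cS _; rewrite mem_hex_edges eB orbT. Qed.

Let uniq_kekuleA : uniq (kekuleA c).
Proof. by have := uniq_kekule c; rewrite cat_uniq => /and3P []. Qed.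

Let uniq_kekuleB : uniq (kekuleB c).
Proof. by have := uniq_kekule c; rewrite cat_uniq => /and3P []. Qed.

Lemma card_hex : #|hex c| = 6.
Proof.
rewrite hexE cardsU (hexA_hexB c) cards0 subn0.
by rewrite !card_edge_set // size_kekuleA size_kekuleB.
Qed.

Lemma card_hexA_star v : v \in hex_verts c -> #|hexA c :&: star v| = 1.
Proof. by move=> Hv; rewrite card_edge_setI_star ?count_incid_kekuleA. Qed.

Lemma card_hexB_star v : v \in hex_verts c -> #|hexB c :&: star v| = 1.
Proof. by move=> Hv; rewrite card_edge_setI_star ?count_incid_kekuleB. Qed.

Lemma card_hex_star v : v \in hex_verts c -> #|hex c :&: star v| = 2.
Proof.
move=> Hv; rewrite hexE setIUl cardsU card_hexA_star ?card_hexB_star //.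
by rewrite -setIIl (hexA_hexB c) set0I cards0.
Qed.

End InS.

Lemma common_hex c d e1 e2 : e1 != e2 ->
  e1 \in hex c -> e1 \in hex d -> e2 \in hex c -> e2 \in hex d -> c = d.
Proof. by rewrite -(inj_eq val_inj) !in_set; exact: common_hex_edges. Qed.

Lemma card_hexI c d : c != d -> #|hex c :&: hex d| <= 1.
Proof.
move=> Ncd; rewrite leqNgt; apply/card_gt1P => -[e1 [e2 []]].
rewrite !in_setI => /andP [e1c e1d] /andP [e2c e2d] N12.
by move: Ncd; rewrite (common_hex N12 e1c e1d e2c e2d) eqxx.
Qed.

Lemma hex_star_pair c v : c \in S -> v \in hex_verts c ->
  exists a b, a != b /\ hex c :&: star v = [set a; b].
Proof. by move=> cS Hv; apply/cards2P; rewrite card_hex_star. Qed.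

Lemma hex_mem_const c X : c \in S ->
  (forall v, v \in hex_verts c -> {in hex c :&: star v &, forall e1 e2, (e1 \in X) = (e2 \in X)}) ->
  {in hex c &, forall e1 e2, (e1 \in X) = (e2 \in X)}.
Proof.
move=> cS HX e1 e2; rewrite !in_set.
pose P (x : edge) := if insub x is Some e then e \in X else false.
have PE (e : E) : P (val e) = (e \in X) by rewrite /P valK.
rewrite -!PE; apply: hex_edges_const => v x1 x2 Hv x1c x2c v1 v2.
rewrite -[x1]/(val [` mem_HE cS x1c]) -[x2]/(val [` mem_HE cS x2c]) !PE.
by apply: (HX v Hv); rewrite !in_setI !in_set /= ?x1c ?x2c ?v1 ?v2.
Qed.

(* Otherwise both edges of [c] at [v] would be edges of the rotated matching. *)
Lemma alternating_star_sub M c v :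
  perfect_matching M -> perfect_matching (symdiff M (hex c)) -> c \in S ->
  v \in hex_verts c -> M :&: star v \subset hex c.
Proof.
move=> HM HMc cS Hv; have vS := mem_HV cS Hv.
have [e Me] := pm_star HM vS.
rewrite Me sub1set; apply/negP => ec.
suff : 2 <= 1 by [].
rewrite -{1}(card_hex_star cS Hv) -(card_pm_star HMc vS).
apply/subset_leq_card/subsetP => x; rewrite !in_setI in_symdiff => /andP [xc xv].
rewrite xc xv andbT addbT; apply/negP => xM; apply: ec.
have : x \in M :&: star v by rewrite in_setI xM xv.
by rewrite Me in_set1 => /eqP <-.
Qed.

Lemma res_adjE X Y : res_adj X Y = [exists c : S, symdiff X Y == hex (val c)].
Proof.
apply: eq_existsb => c; apply/forallP/eqP => [H|/setP H e].
  apply/setP => e; rewrite in_symdiff in_set -(eqP (H e)).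
  by case: (e \in X); case: (e \in Y).
have := H e; rewrite in_symdiff in_set => <-.
by case: (e \in X); case: (e \in Y).
Qed.

Lemma symdiff_hex_pair x y x' y' : x \in S -> y \in S -> x' \in S -> x' != y' ->
  symdiff (hex x) (hex y) = symdiff (hex x') (hex y') -> x' = x \/ x' = y.
Proof.
move=> xS yS x'S Nx'y' Exy.
have [->|Nx'x] := eqVneq x' x; first by left.
have [->|Nx'y] := eqVneq x' y; first by right.
(* otherwise the six edges of [x'] lie in three hexagons sharing at most one
   edge each with it *)
exfalso; have : hex x' \subset (hex x' :&: hex x) :|: (hex x' :&: hex y) :|: (hex x' :&: hex y').
  apply/subsetP => e ex'; rewrite !in_setU !in_setI ex' /=.
  case ey': (e \in hex y'); rewrite ?orbT //=.
  have : e \in symdiff (hex x') (hex y') by rewrite in_symdiff ex' ey'.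
  by rewrite -Exy in_symdiff; case: (e \in hex x); case: (e \in hex y).
move/subset_leq_card; rewrite card_hex //.
have := card_hexI Nx'x; have := card_hexI Nx'y; have := card_hexI Nx'y'.
rewrite !cardsU; lia.
Qed.

Lemma symdiff_hexA c : symdiff (hexA c) (hex c) = hexB c.
Proof.
apply/setP => e; rewrite in_symdiff hexE in_setU.
case eA: (e \in hexA c); case eB: (e \in hexB c) => //.
by move/setP/(_ e): (hexA_hexB c); rewrite in_setI eA eB in_set0.
Qed.

Lemma hex_star_out c v : v \notin hex_verts c -> hex c :&: star v = set0.
Proof.
move=> vc; apply/setP => e; rewrite in_setI in_set0; apply/andP => -[ec ev].
by move: vc; rewrite (hex_star_vert ec ev).
Qed.

Definition matchings_in F := [set M | perfect_matching M && (M \subset F)].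

Lemma hex_star_sub_eq c d v : c \in S -> v \in hex_verts c ->
  hex c :&: star v \subset hex d -> c = d.
Proof.
move=> cS vc /subsetP sub; have [a [b [Nab ab]]] := hex_star_pair cS vc.
have [ain bin] : a \in hex c :&: star v /\ b \in hex c :&: star v.
  by rewrite ab set21 set22.
move: (ain) (bin) => /setIP [ac _] /setIP [bc _].
exact: common_hex Nab ac (sub a ain) bc (sub b bin).
Qed.

(* The edges of [d] at [v] are the [M]-edge, which lies on [c], and the edge
   matched by [M] rotated at [d], which lies on [c] as well. *)
Lemma alternating_hexes_eq M c d v : c \in S -> d \in S ->
  perfect_matching M -> perfect_matching (symdiff M (hex c)) ->
  perfect_matching (symdiff M (hex d)) ->
  perfect_matching (symdiff (symdiff M (hex d)) (hex c)) ->
  v \in hex_verts c -> v \in hex_verts d -> c = d.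
Proof.
move=> cS dS HM HMc HMd HMdc vc vd; have [e Me] := pm_star HM (mem_HV cS vc).
apply/esym/(hex_star_sub_eq dS vd)/subsetP => x /setIP [xd xv].
case xM: (x \in M).
  have : x \in M :&: star v by rewrite in_setI xM.
  rewrite Me in_set1 => /eqP ->.
  by apply: (subsetP (alternating_star_sub HM HMc cS vc)); rewrite Me set11.
apply: (subsetP (alternating_star_sub HMd HMdc cS vc)).
by rewrite in_setI in_symdiff xM xd xv.
Qed.

Section RotatedHexagons.
Variables (k : nat) (M0 : {set E}) (h : 'I_k -> cell).
Implicit Types (a b : {set 'I_k}) (i j : 'I_k).
Hypothesis h_S : forall j, h j \in S.
Hypothesis h_disjoint :
  forall i j v, v \in hex_verts (h i) -> v \in hex_verts (h j) -> i = j.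

Definition hexes (a : {set 'I_k}) := (\bigcup_(j in a) hex (h j))%SET.
Definition rotate a := symdiff M0 (hexes a).
Definition cover := M0 :|: hexes setT.

Lemma hex_h_disjoint i j e : e \in hex (h i) -> e \in hex (h j) -> i = j.
Proof.
by move=> ei ej; apply: (@h_disjoint _ _ (val e).1); apply: hex_star_vert (star_fst e).
Qed.

Lemma mem_hexes a j e : e \in hex (h j) -> (e \in hexes a) = (j \in a).
Proof.
move=> ej; apply/bigcupP/idP => [[i ia ei]|ja]; last by exists j.
by rewrite (hex_h_disjoint ej ei).
Qed.

Lemma notin_hexes a e : (forall j, e \notin hex (h j)) -> e \notin hexes a.
Proof. by move=> en; apply/bigcupP => -[j _]; apply/negP. Qed.

Lemma hexes0 : hexes set0 = set0.
Proof. exact: big_set0. Qed.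

Lemma hexes1 j : hexes [set j] = hex (h j).
Proof. exact: big_set1. Qed.

Lemma symdiff_hexes a b : symdiff (hexes a) (hexes b) = hexes (symdiff a b).
Proof.
apply/setP => e; case: (pickP (fun j => e \in hex (h j))) => [j ej|en].
  by rewrite in_symdiff !(mem_hexes _ ej) in_symdiff.
by rewrite in_symdiff !(negbTE (notin_hexes _ _)) // => j; rewrite en.
Qed.

Lemma card_hexes a : #|hexes a| = 6 * #|a|.
Proof.
elim/setU1_ind: a => [|j a ja IHa]; first by rewrite hexes0 !cards0.
have -> : hexes (j |: a) = hex (h j) :|: hexes a.
  by rewrite -hexes1 /hexes bigcup_setU.
rewrite cardsU card_hex // IHa cardsU1 ja.
suff -> : hex (h j) :&: hexes a = set0 by rewrite cards0 subn0 mulnDr.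
apply/setP => e; rewrite in_setI in_set0.
by apply/andP => -[ej]; rewrite (mem_hexes _ ej) (negbTE ja).
Qed.

Lemma rotate_add a j : j \notin a -> rotate (j |: a) = symdiff (rotate a) (hex (h j)).
Proof.
move=> ja; rewrite /rotate -symdiffA -hexes1 symdiff_hexes; congr (symdiff _ (hexes _)).
apply/setP => i; rewrite in_symdiff !inE.
by case: (eqVneq i j) => [->|]; rewrite ?(negbTE ja) ?addbF.
Qed.

Lemma symdiff_rotate a b : symdiff (rotate a) (rotate b) = hexes (symdiff a b).
Proof. by rewrite symdiff_symdiffl symdiff_hexes. Qed.

Lemma rotate_inj : injective rotate.
Proof.
move=> a b Eab; apply/eqP; rewrite -symdiff_eq0 -cards_eq0.
by have := card_hexes (symdiff a b); rewrite -symdiff_rotate Eab symdiffvv cards0; lia.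
Qed.

Lemma res_adj_rotate a b : res_adj (rotate a) (rotate b) = cube_adj a b.
Proof.
rewrite res_adjE symdiff_rotate /cube_adj -/(symdiff a b).
apply/existsP/idP => [[c /eqP Dc]|/cards1P [j ->]].
  by apply/eqP; have := card_hex (fsvalP c); rewrite -Dc card_hexes; lia.
by exists [` h_S j]; rewrite hexes1.
Qed.

Lemma rotate_sub a : rotate a \subset cover.
Proof.
apply/subsetP => e; rewrite in_symdiff in_setU.
by case: (e \in M0) => //= /bigcupP [j _ ej]; apply/bigcupP; exists j.
Qed.

Lemma cover_rotations e : (e \in cover) = [exists a, e \in rotate a].
Proof.
apply/idP/existsP => [|[a /(subsetP (rotate_sub a))] //].
move=> ecov; case eM: (e \in M0).
  by exists set0; rewrite in_symdiff hexes0 in_set0 eM.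
move: ecov; rewrite in_setU eM => /bigcupP [j _ ej].
by exists [set j]; rewrite in_symdiff hexes1 eM ej.
Qed.

Lemma hexes_star a j v : v \in hex_verts (h j) ->
  hexes a :&: star v = if j \in a then hex (h j) :&: star v else set0.
Proof.
move=> vj; apply/setP => e; rewrite in_setI.
apply/andP/idP => [[/bigcupP [i ia ei] ev]|].
  by rewrite -(h_disjoint (hex_star_vert ei ev) vj) ia in_setI ei ev.
case: ifP => ja; last by rewrite in_set0.
by rewrite in_setI => /andP [ej ev]; split => //; apply/bigcupP; exists j.
Qed.

Lemma hexes_star0 a v : (forall j, v \notin hex_verts (h j)) -> hexes a :&: star v = set0.
Proof.
move=> vn; apply/setP => e; rewrite in_setI in_set0.
by apply/andP => -[/bigcupP [j _ ej] ev]; move: (vn j); rewrite (hex_star_vert ej ev).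
Qed.

Hypothesis M0_pm : perfect_matching M0.
Hypothesis M0_alt : forall j, perfect_matching (symdiff M0 (hex (h j))).

Lemma M0_star j v : v \in hex_verts (h j) -> M0 :&: star v \subset hex (h j).
Proof. exact: alternating_star_sub. Qed.

Lemma rotate_pm a : perfect_matching (rotate a).
Proof.
apply/perfect_matchingP => v vS; rewrite /rotate symdiffIl.
case: (pickP (fun j => v \in hex_verts (h j))) => [j vj|vn].
  rewrite (hexes_star a vj); case: ifP => _; last by rewrite symdiff0 card_pm_star.
  by rewrite -symdiffIl card_pm_star.
by rewrite hexes_star0 ?symdiff0 ?card_pm_star // => j; rewrite vn.
Qed.

Lemma cover_star j v : v \in hex_verts (h j) -> cover :&: star v = hex (h j) :&: star v.
Proof.
move=> vj; rewrite /cover setIUl (hexes_star _ vj) in_setT; apply/setUidPr.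
by rewrite subsetI M0_star // subsetIr.
Qed.

Lemma cover_star0 v : (forall j, v \notin hex_verts (h j)) ->
  cover :&: star v = M0 :&: star v.
Proof. by move=> vn; rewrite /cover setIUl hexes_star0 // setU0. Qed.

Lemma hex_comp_cover j : hex_comp cover (h j).
Proof.
apply/and3P; split; first exact: h_S.
  apply/forallP => e; apply/implyP => ej; rewrite in_setU (@mem_hexes _ j) ?in_setT ?orbT //.
  by rewrite in_set.
by apply/allP => v vj; rewrite degE (cover_star vj) card_hex_star.
Qed.

Lemma hex_comp_cover_inv c : hex_comp cover c -> exists j, c = h j.
Proof.
case/and3P => cS /forallP c_sub /allP c_deg.
have vc := anchor_hex_verts c; set v := anchor c in vc.
have /eqP := c_deg v vc; rewrite degE.
case: (pickP (fun j => v \in hex_verts (h j))) => [j vj|vn] cover_v; last first.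
  by move: cover_v; rewrite cover_star0 ?card_pm_star ?(mem_HV cS) // => j; rewrite vn.
exists j; apply: hex_star_sub_eq cS vc _.
apply: subset_trans (subsetIl _ (star v)); rewrite -(cover_star vj) setSI //.
by apply/subsetP => e; rewrite in_set; apply/implyP.
Qed.

Lemma nhex_cover : nhex cover = k.
Proof.
have h_inj : injective h.
  by move=> i j hij; apply: (h_disjoint (anchor_hex_verts (h i))); rewrite hij anchor_hex_verts.
rewrite /nhex (_ : [set c : S | _] = [set [` h_S j] | j in 'I_k]).
  by rewrite card_imset ?card_ord // => i j /(congr1 val) /h_inj.
apply/setP => c; rewrite in_set; apply/idP/imsetP => [/hex_comp_cover_inv [j cj]|[j _ ->]].
  by exists j => //; apply: val_inj.
exact: hex_comp_cover.
Qed.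

Lemma clar_cover_cover : clar_cover cover.
Proof.
apply/forallP => -[v vS] /=.
case: (pickP (fun j => v \in hex_verts (h j))) => [j vj|vn].
  by apply/orP; left; apply/existsP; exists [` h_S j]; rewrite /= hex_comp_cover.
have [e Me] := pm_star M0_pm vS.
have /setIP [eM ev] : e \in M0 :&: star v by rewrite Me set11.
(* the matched edge at [v] avoids the rotated hexagons, so it is a K2 component *)
have deg1 u : e \in star u -> deg cover u == 1.
  move=> eu; rewrite degE cover_star0 ?card_pm_star ?(HV_incid (e := e)) //.
    by move: eu; rewrite in_set.
  move=> j; apply/negP => uj; move: (vn j) => /negbT /negP; apply.
  by apply: (hex_star_vert _ ev); apply: (subsetP (M0_star uj)); rewrite in_setI eM.
apply/orP; right; apply/existsP; exists e.
by rewrite /edge_comp in_setU eM !deg1 ?star_fst ?star_snd //; move: ev; rewrite in_set.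
Qed.

Lemma symdiff_pm_sub_cover_const N j : perfect_matching N -> N \subset cover ->
  {in hex (h j) &, forall e1 e2, (e1 \in symdiff M0 N) = (e2 \in symdiff M0 N)}.
Proof.
move=> HN Ncov; apply: hex_mem_const (h_S j) _ => v vj e1 e2.
have vS := mem_HV (h_S j) vj.
have [p [q [Npq pq]]] := hex_star_pair (h_S j) vj.
have [m Mm] := pm_star M0_pm vS; have [n Nn] := pm_star HN vS.
have m_pq : m \in [set p; q].
  by rewrite -pq; apply: (subsetP _ m (set11 m)); rewrite -Mm subsetI M0_star ?subsetIr.
have n_pq : n \in [set p; q].
  by rewrite -pq -(cover_star vj); apply: (subsetP _ n (set11 n)); rewrite -Nn setSI.
have memD e : e \in star v -> (e \in symdiff M0 N) = (e == m) (+) (e == n).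
  by move=> ev; rewrite in_symdiff -!in_set1 -Mm -Nn !in_setI ev !andbT.
move=> /[dup] /setIP [_ /memD ->] + /[dup] /setIP [_ /memD ->].
rewrite pq; move: m_pq n_pq; rewrite !in_set2.
by do 4 case/orP => /eqP ->; rewrite ?eqxx ?(negbTE Npq) ?(eq_sym q) ?(negbTE Npq).
Qed.

Lemma pm_sub_cover_off N e : perfect_matching N -> N \subset cover ->
  (forall j, e \notin hex (h j)) -> (e \in N) = (e \in M0).
Proof.
move=> HN Ncov en; apply/idP/idP => [eN|eM].
  by move: (subsetP Ncov e eN); rewrite in_setU (negbTE (notin_hexes _ en)) orbF.
set v := (val e).1.
have vn j : v \notin hex_verts (h j).
  by apply/negP => vj; move: (en j); rewrite (subsetP (M0_star vj)) // in_setI eM star_fst.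
have vS : v \in HV S by apply: (@HV_incid e); rewrite incid_fst.
have [m Mm] := pm_star M0_pm vS; have [n Nn] := pm_star HN vS.
have em : e \in M0 :&: star v by rewrite in_setI eM star_fst.
have nm : n \in M0 :&: star v.
  by rewrite -(cover_star0 vn) (subsetP (setSI _ Ncov)) // Nn set11.
move: em nm; rewrite Mm !in_set1 => /eqP -> /eqP <-.
by have /setIP [] : n \in N :&: star v by rewrite Nn set11.
Qed.

Lemma pm_sub_cover N : perfect_matching N -> N \subset cover -> exists a, N = rotate a.
Proof.
move=> HN Ncov; exists [set j | [exists e in hex (h j), e \in symdiff M0 N]].
rewrite /rotate -[LHS](symdiffKl M0); congr symdiff; apply/setP => e.
case: (pickP (fun j => e \in hex (h j))) => [j ej|en].
  rewrite (mem_hexes _ ej) [RHS]in_set; apply/idP/exists_inP => [eD|[e' e'j]].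
    by exists e.
  by rewrite (symdiff_pm_sub_cover_const HN Ncov ej e'j).
rewrite in_symdiff (pm_sub_cover_off HN Ncov) ?addbb ?(negbTE (notin_hexes _ _)) //.
all: by move=> j; rewrite en.
Qed.

Lemma matchings_in_cover : matchings_in cover = [set rotate a | a in [set: {set 'I_k}]].
Proof.
apply/setP => M; rewrite inE.
apply/andP/imsetP => [[HM /(pm_sub_cover HM) [a ->]]|[a _ ->]]; first by exists a.
by rewrite rotate_pm rotate_sub.
Qed.

Lemma matchings_in_cover_cube :
  [forall M in matchings_in cover, perfect_matching M] && induces_cube k (matchings_in cover).
Proof.
apply/andP; split; first by apply/forall_inP => M; rewrite inE => /andP [].
apply/existsP; exists [ffun a => rotate a]; apply/and3P; split.
- by apply/injectiveP => a b; rewrite !ffunE; apply: rotate_inj.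
- rewrite matchings_in_cover; apply/eqP/eq_imset => a; exact: ffunE.
- by apply/forallP => a; apply/forallP => b; rewrite !ffunE res_adj_rotate.
Qed.

End RotatedHexagons.

Section InducedCube.
Variables (k : nat) (f : {set 'I_k} -> {set E}).
Implicit Types (a b : {set 'I_k}) (i j : 'I_k).
Hypothesis f_inj : injective f.
Hypothesis f_pm : forall a, perfect_matching (f a).
Hypothesis f_adj : forall a b, res_adj (f a) (f b) = cube_adj a b.

Lemma cube_adj_setU1 a j : j \notin a -> cube_adj a (j |: a).
Proof.
move=> ja; rewrite /cube_adj; suff -> : (a :\: (j |: a)) :|: ((j |: a) :\: a) = [set j].
  by rewrite cards1.
apply/setP => i; rewrite !inE.
by case: (eqVneq i j) => [->|_]; rewrite ?(negbTE ja) //=; case: (i \in a).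
Qed.

Lemma cube_edge_hex a b : cube_adj a b -> exists2 c, c \in S & f b = symdiff (f a) (hex c).
Proof.
rewrite -f_adj res_adjE => /existsP [c /eqP Dc].
by exists (val c); rewrite ?fsvalP // -Dc symdiffKl.
Qed.

Lemma cube_hexes : exists h : 'I_k -> cell,
  forall j, h j \in S /\ f [set j] = symdiff (f set0) (hex (h j)).
Proof.
suff /fin_all_exists [h Dh] :
    forall j, exists c, c \in S /\ f [set j] = symdiff (f set0) (hex c) by exists h.
move=> j; have [c cS Dc] := cube_edge_hex (@cube_adj_setU1 set0 j (negbT (in_set0 j))).
by exists c; rewrite -Dc setU0.
Qed.

Variable h : 'I_k -> cell.
Hypothesis h_S : forall j, h j \in S.
Hypothesis f1 : forall j, f [set j] = symdiff (f set0) (hex (h j)).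

(* The two hexagon pairs around the square have the same symmetric difference. *)
Lemma cube_square a i j : i != j -> i \notin a -> j \notin a ->
  f (i |: a) = symdiff (f a) (hex (h i)) -> f (j |: a) = symdiff (f a) (hex (h j)) ->
  f (j |: (i |: a)) = symdiff (f (i |: a)) (hex (h j)).
Proof.
move=> Nij ia ja Di Dj.
have j_ia : j \notin i |: a by rewrite in_setU1 (negbTE ja) orbF eq_sym.
have i_ja : i \notin j |: a by rewrite in_setU1 (negbTE ia) orbF.
have [g gS Dg] := cube_edge_hex (cube_adj_setU1 j_ia).
have [g' g'S Dg'] := cube_edge_hex (cube_adj_setU1 i_ja); rewrite setUCA in Dg'.
have Ning : h i != g.
  apply: contraNneq ja => hig; move: Dg; rewrite Di -hig symdiffK => /f_inj ia_a.
  by rewrite -ia_a setU11.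
have Njng' : h j != g'.
  apply: contraNneq ja => hjg'; move: Dg'; rewrite Dj -hjg' symdiffK => /f_inj ja_a.
  by rewrite -ja_a setU11.
have Dgg' : symdiff (hex (h i)) (hex g) = symdiff (hex (h j)) (hex g').
  move: Dg; rewrite Dg' Di Dj -!symdiffA => /(congr1 (symdiff (f a))).
  by rewrite !symdiffKl.
have [hji|->] := symdiff_hex_pair (h_S i) gS (h_S j) Njng' Dgg'; last exact: Dg.
have : f (j |: a) = f (i |: a) by rewrite Di Dj hji.
by move/f_inj/setP/(_ j); rewrite !in_setU1 eqxx (negbTE ja) orbF eq_sym (negbTE Nij).
Qed.

Lemma cube_add a j : j \notin a -> f (j |: a) = symdiff (f a) (hex (h j)).
Proof.
elim/setU1_ind: a j => [|i a ia IHa] j; first by rewrite setU0 f1.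
rewrite in_setU1 negb_or eq_sym => /andP [Nij ja].
exact: cube_square Nij ia ja (IHa _ ia) (IHa _ ja).
Qed.

Lemma cube_hexes_disjoint i j v :
  v \in hex_verts (h i) -> v \in hex_verts (h j) -> i = j.
Proof.
move=> vi vj; case: (eqVneq i j) => // Nij.
have ji : j \notin [set i] by rewrite in_set1 eq_sym.
have ij : i \notin [set j] by rewrite in_set1.
have hij : h i = h j.
  apply: (@alternating_hexes_eq (f [set i])) vi vj; rewrite ?h_S ?f_pm //.
  - by rewrite f1 symdiffK.
  - by rewrite -cube_add.
  - by rewrite -(cube_add ji) setUC (cube_add ij) symdiffK.
have : f [set i] = f [set j] by rewrite !f1 hij.
by move/f_inj/setP/(_ i); rewrite !in_set1 eqxx (negbTE Nij).
Qed.

Lemma cube_rotate a : f a = rotate (f set0) h a.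
Proof.
elim/setU1_ind: a => [|j a ja IHa]; first by rewrite /rotate hexes0 symdiff0.
by rewrite cube_add // IHa (@rotate_add _ _ _ cube_hexes_disjoint).
Qed.

End InducedCube.

Section ClarCoverDecomposition.
Variable F : {set E}.
Hypothesis F_clar : clar_cover F.

Definition hex_comps := [set c : S | hex_comp F (val c)].

(* Replacing each hexagon component of [F] by its Kekule structure [A] yields
   a perfect matching, from which [F] is obtained by adding the hexagons. *)
Definition clar_base :=
  ((F :\: \bigcup_(c in hex_comps) hex (val c)) :|: \bigcup_(c in hex_comps) hexA (val c))%SET.

Lemma hex_comp_sub (c : S) : c \in hex_comps -> hex (val c) \subset F.
Proof.
rewrite inE => /and3P [_ /forallP sub _]; apply/subsetP => e; rewrite in_set.
exact: (implyP (sub e)).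
Qed.

Lemma clar_star_hex_comp (c : S) v : c \in hex_comps -> v \in hex_verts (val c) ->
  F :&: star v = hex (val c) :&: star v.
Proof.
move=> cH vc; apply/esym/eqP; rewrite eqEcard setSI ?hex_comp_sub //=.
move: cH; rewrite inE => /and3P [_ _ /allP /(_ v vc)]; rewrite degE => /eqP ->.
by rewrite card_hex_star ?fsvalP.
Qed.

Lemma hex_comp_unique (c d : S) v : c \in hex_comps -> d \in hex_comps ->
  v \in hex_verts (val c) -> v \in hex_verts (val d) -> c = d.
Proof.
move=> cH dH vc vd; apply/val_inj/(hex_star_sub_eq (fsvalP c) vc).
by rewrite -(clar_star_hex_comp cH vc) (clar_star_hex_comp dH vd) subsetIl.
Qed.

Lemma clar_star_K2 v : v \in HV S ->
  (forall c : S, c \in hex_comps -> v \notin hex_verts (val c)) -> #|F :&: star v| = 1.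
Proof.
move=> vS vn; case/orP: (forallP F_clar [` vS]) => /existsP /= [x].
  by case/andP => xH vx; move: (vn x); rewrite inE xH vx => /(_ isT).
case/andP => /and3P [_ e1 e2]; rewrite -degE.
by case/orP => /eqP <-; apply/eqP.
Qed.

Lemma clar_base_star_hex_comp (c : S) v : c \in hex_comps -> v \in hex_verts (val c) ->
  clar_base :&: star v = hexA (val c) :&: star v.
Proof.
move=> cH vc; apply/setP => x; rewrite !in_setI in_setU in_setD.
case xv: (x \in star v); rewrite ?andbF // !andbT.
apply/idP/idP => [/orP [/andP [xU xF]|/bigcupP [d dH xd]]|xc].
- have : x \in F :&: star v by rewrite in_setI xF xv.
  rewrite (clar_star_hex_comp cH vc) in_setI => /andP [xc _].
  by case/negP: xU; apply/bigcupP; exists c.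
- have xd' : x \in hex (val d) by rewrite hexE in_setU xd.
  by rewrite -(hex_comp_unique dH cH (hex_star_vert xd' xv) vc).
- by apply/orP; right; apply/bigcupP; exists c.
Qed.

Lemma clar_base_star_K2 v : (forall c : S, c \in hex_comps -> v \notin hex_verts (val c)) ->
  clar_base :&: star v = F :&: star v.
Proof.
move=> vn; apply/setP => x; rewrite !in_setI in_setU in_setD.
case xv: (x \in star v); rewrite ?andbF // !andbT.
have nd (d : S) : d \in hex_comps -> x \notin hex (val d).
  by move=> dH; apply: contra (vn d dH) => xd; apply: hex_star_vert xd xv.
have xUA : x \notin (\bigcup_(d in hex_comps) hexA (val d))%SET.
  by apply/bigcupP => -[d dH xd]; move: (nd d dH); rewrite hexE in_setU xd.
have xU : x \notin (\bigcup_(d in hex_comps) hex (val d))%SET.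
  by apply/bigcupP => -[d dH]; apply/negP/nd.
by rewrite (negbTE xUA) xU orbF.
Qed.

Lemma clar_base_pm : perfect_matching clar_base.
Proof.
apply/perfect_matchingP => v vS.
case: (pickP (fun c : S => (c \in hex_comps) && (v \in hex_verts (val c)))).
  by move=> c /andP [cH vc]; rewrite (clar_base_star_hex_comp cH vc) card_hexA_star ?fsvalP.
move=> vn.
have vn' (c : S) : c \in hex_comps -> v \notin hex_verts (val c).
  by move=> cH; apply/negP => vc; move: (vn c); rewrite cH vc.
by rewrite clar_base_star_K2 // clar_star_K2.
Qed.

Lemma clar_base_alt (c : S) :
  c \in hex_comps -> perfect_matching (symdiff clar_base (hex (val c))).
Proof.
move=> cH; apply/perfect_matchingP => v vS; rewrite symdiffIl.
case: (boolP (v \in hex_verts (val c))) => vc.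
  by rewrite (clar_base_star_hex_comp cH vc) -symdiffIl symdiff_hexA card_hexB_star ?fsvalP.
by rewrite hex_star_out // symdiff0 card_pm_star // clar_base_pm.
Qed.

Definition hex_comp_cell (j : 'I_#|hex_comps|) : cell := val (enum_val j).

Lemma hex_comp_cell_S j : hex_comp_cell j \in S.
Proof. exact: fsvalP. Qed.

Lemma hex_comp_cell_disjoint i j v :
  v \in hex_verts (hex_comp_cell i) -> v \in hex_verts (hex_comp_cell j) -> i = j.
Proof.
by move=> vi vj; apply/enum_val_inj/(hex_comp_unique (enum_valP i) (enum_valP j) vi vj).
Qed.

Lemma hex_comp_cell_alt j : perfect_matching (symdiff clar_base (hex (hex_comp_cell j))).
Proof. exact: clar_base_alt (enum_valP j). Qed.

Lemma clar_cover_eq : F = cover clar_base hex_comp_cell.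
Proof.
set U := (\bigcup_(c in hex_comps) hex (val c))%SET.
rewrite /cover; have -> : hexes hex_comp_cell setT = U.
  apply/setP => e; apply/bigcupP/bigcupP => [[j _ ej]|[c cH ec]].
    by exists (enum_val j); rewrite ?enum_valP.
  by exists (enum_rank_in cH c); rewrite ?in_setT // /hex_comp_cell enum_rankK_in.
apply/setP => e; rewrite !in_setU in_setD.
case eU: (e \in U); rewrite ?orbT ?orbF /=.
  by case/bigcupP: eU => c cH ec; rewrite (subsetP (hex_comp_sub cH)).
apply/idP/idP => [->//|/orP [//|/bigcupP [c cH ec]]].
by move/negbT: eU => /bigcupP []; exists c; rewrite // hexE in_setU ec.
Qed.

Lemma clar_cover_rotations :
  matchings_in F = [set rotate clar_base hex_comp_cell a | a in [set: {set 'I_#|hex_comps|}]].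
Proof.
rewrite [X in matchings_in X]clar_cover_eq.
exact: matchings_in_cover hex_comp_cell_S hex_comp_cell_disjoint
  clar_base_pm hex_comp_cell_alt.
Qed.

Lemma clar_cover_union e : (e \in F) = [exists M in matchings_in F, e \in M].
Proof.
rewrite {1}clar_cover_eq cover_rotations clar_cover_rotations.
apply/existsP/exists_inP => [[a ea]|[M /imsetP [a _ ->] ea]]; last by exists a.
by exists (rotate clar_base hex_comp_cell a); rewrite ?imset_f.
Qed.

Lemma clar_cover_cube :
  [forall M in matchings_in F, perfect_matching M] && induces_cube (nhex F) (matchings_in F).
Proof.
rewrite [X in matchings_in X]clar_cover_eq.
exact: matchings_in_cover_cube hex_comp_cell_S hex_comp_cell_disjoint
  clar_base_pm hex_comp_cell_alt.
Qed.

End ClarCoverDecomposition.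

Lemma induced_cube_clar k (W : {set {set E}}) :
  [forall M in W, perfect_matching M] && induces_cube k W ->
  exists2 F, clar_cover F && (nhex F == k) & W = matchings_in F.
Proof.
case/andP => /forall_inP W_pm /existsP [f /and3P [/injectiveP f_inj /eqP Wf /forallP f_adj]].
have f_pm a : perfect_matching (f a) by apply: W_pm; rewrite -Wf imset_f.
have {}f_adj a b : res_adj (f a) (f b) = cube_adj a b := eqP (forallP (f_adj a) b).
have [h Dh] := cube_hexes f_adj.
have h_S j : h j \in S by case: (Dh j).
have f1 j : f [set j] = symdiff (f set0) (hex (h j)) by case: (Dh j).
have h_disj := cube_hexes_disjoint f_inj f_pm f_adj h_S f1.
have M0_pm := f_pm set0.
have M0_alt j : perfect_matching (symdiff (f set0) (hex (h j))) by rewrite -f1.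
exists (cover (f set0) h).
  apply/andP; split; first exact: clar_cover_cover h_S h_disj M0_pm M0_alt.
  by apply/eqP; apply: nhex_cover h_S h_disj M0_pm M0_alt.
rewrite (matchings_in_cover h_S h_disj M0_pm M0_alt) -Wf.
by apply: eq_imset => a; apply: cube_rotate.
Qed.

Theorem zClar_alpha k : zClar S k = alpha S k.
Proof.
rewrite /zClar /alpha.
have -> : [set W : {set {set E}} | [forall M in W, perfect_matching M] && induces_cube k W] =
          matchings_in @: [set F | clar_cover F && (nhex F == k)].
  apply/setP => W; rewrite inE; apply/idP/imsetP => [/induced_cube_clar [F HF ->]|[F]].
    by exists F; rewrite ?inE.
  by rewrite inE => /andP [HF /eqP <-] ->; apply: clar_cover_cube.
rewrite card_in_imset // => F1 F2; rewrite !inE => /andP [HF1 _] /andP [HF2 _] E12.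
by apply/setP => e; rewrite (clar_cover_union HF1) (clar_cover_union HF2) E12.
Qed.

End Matchings.

Theorem theorem1 (S : {fset cell}) :
  hexagonal_system S -> kekulean S ->
  forall i : nat, zClar S i = alpha S i.
Proof. by move=> _ _; exact: zClar_alpha. Qed.
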